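(* Let $T_0\subset\overline{\mathbb R}^X$ be an extended vector lattice, $T_0^+=\{x\in T_0:x\ge0\}$, and let $S:T_0\to\mathbb R$ be an $S$-integral. For $x\in T_0^+$ put $P(x):=\sup\{S(\varphi):\varphi\in T_0,\ 0\le\varphi\le x\}$ (a real number), and for $x\in T_0$ put $S^+(x):=P(x\vee0)-P((-x)\vee0)$, $S^-(x):=S^+(x)-S(x)$ and $|S|(x):=S^+(x)+S^-(x)$. Then $P(x_1+x_2)=P(x_1)+P(x_2)$ for $x_1,x_2\in T_0^+$, $S^+(x)=P(\varphi)-P(\psi)$ whenever $x=\varphi-\psi$ with $\varphi,\psi\in T_0^+$, and each of $S^+$, $S^-$ and $|S|$ is an $I$-integral on $T_0$; in particular $S=S^+-S^-$ is a difference of two $I$-integrals.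
   Context: Let $X$ be a nonempty set, $\overline{\mathbb R}=\mathbb R\cup\{-\infty,\infty\}$, $\overline{\mathbb R}^X$ the functions $X\to\overline{\mathbb R}$ with pointwise order, $\wedge$, $\vee$, $|\cdot|$. Addition convention: $(x+y)(t)=x(t)+y(t)$ when defined and $0$ where $\{x(t),y(t)\}=\{\infty,-\infty\}$; $x-y:=x+(-y)$; scalar multiples pointwise with $0\cdot(\pm\infty)=0$. An extended vector lattice is a set $T_0\subset\overline{\mathbb R}^X$ closed under real linear combinations, $\wedge$, $\vee$, and such that for $x,y\in T_0$ and any $c\in\overline{\mathbb R}$ the function equal to $x(t)+y(t)$ where defined and $c$ where $\{x(t),y(t)\}=\{\infty,-\infty\}$ is in $T_0$. $(x_n)\searrow0$ means pointwise nonincreasing with pointwise limit $0$. An $I$-integral on $T_0$ is a linear map $I:T_0\to\mathbb R$ with $I(x)\ge0$ for $x\ge0$ and $I(x_n)\to0$ whenever $(x_n)\subset T_0$, $(x_n)\searrow0$. An $S$-integral on $T_0$ is a map $S:T_0\to\mathbb R$ such that (S1) $S$ is linear; (S2) $(x_n)\subset T_0$, $(x_n)\searrow0$ implies $S(x_n)\to0$; (S3) there is a function $M:T_0^+\to\mathbb R$ with $M(\varphi)\le M(\psi)$ whenever $\varphi,\psi\in T_0^+$, $\varphi\le\psi$, and $|S(x)|\le M(|x|)$ for all $x\in T_0$. *)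

From HB Require Import structures.
From mathcomp Require Import all_boot all_order all_algebra.
From mathcomp Require Import all_classical all_reals all_analysis.
Set Implicit Arguments. Unset Strict Implicit. Unset Printing Implicit Defensive.
Import Order.TTheory GRing.Theory Num.Theory numFieldNormedType.Exports.
Local Open Scope classical_set_scope.
Local Open Scope ring_scope.

Section Ext.
Variables (R : realType) (X : Type).
Local Open Scope ereal_scope.

(* the paper's addition convention on extended reals: oo + (-oo) := 0 *)
Definition ev_xadd (a b : \bar R) : \bar R :=
  match a, b with
  | +oo, -oo => 0
  | -oo, +oo => 0
  | _, _ => a + b
  end.

Definition ev_fadd (x y : X -> \bar R) : X -> \bar R := fun t => ev_xadd (x t) (y t).
Definition ev_fopp (x : X -> \bar R) : X -> \bar R := fun t => - x t.
Definition ev_fsub (x y : X -> \bar R) : X -> \bar R := ev_fadd x (ev_fopp y).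
(* scalar multiple, with 0 * (+-oo) = 0 (mathcomp's convention for mule) *)
Definition ev_fscale (c : R) (x : X -> \bar R) : X -> \bar R := fun t => c%:E * x t.
Definition ev_fmin (x y : X -> \bar R) : X -> \bar R := fun t => Order.min (x t) (y t).
Definition ev_fmax (x y : X -> \bar R) : X -> \bar R := fun t => Order.max (x t) (y t).
Definition ev_fabs (x : X -> \bar R) : X -> \bar R := fun t => `| x t |.
Definition ev_fzero : X -> \bar R := fun _ => 0.
Definition ev_fle (x y : X -> \bar R) : Prop := forall t, x t <= y t.

Definition ev_fadd_patch (x y : X -> \bar R) (c : \bar R) : X -> \bar R :=
  fun t => match x t, y t with
           | +oo, -oo => c
           | -oo, +oo => c
           | a, b => a + b
           end.

Definition ext_vector_lattice (T0 : set (X -> \bar R)) : Prop :=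
  [/\ (forall x y (a b : R), T0 x -> T0 y -> T0 (ev_fadd (ev_fscale a x) (ev_fscale b y))),
      (forall x y, T0 x -> T0 y -> T0 (ev_fmin x y)),
      (forall x y, T0 x -> T0 y -> T0 (ev_fmax x y)) &
      (forall x y c, T0 x -> T0 y -> T0 (ev_fadd_patch x y c))].

Definition ev_pos_part (T0 : set (X -> \bar R)) : set (X -> \bar R) :=
  [set x | T0 x /\ ev_fle ev_fzero x].

Definition ev_decr_to0 (xs : nat -> X -> \bar R) : Prop :=
  (forall n t, xs n.+1 t <= xs n t) /\
  (forall t, (fun n => xs n t) @ \oo --> (0 : \bar R)).

Definition ev_is_linear (T0 : set (X -> \bar R)) (S : (X -> \bar R) -> R) : Prop :=
  forall x y (a b : R), T0 x -> T0 y ->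
    S (ev_fadd (ev_fscale a x) (ev_fscale b y)) = (a * S x + b * S y)%R.

Definition ev_seq_continuous (T0 : set (X -> \bar R)) (S : (X -> \bar R) -> R) : Prop :=
  forall xs : nat -> X -> \bar R, (forall n, T0 (xs n)) -> ev_decr_to0 xs ->
    (fun n => S (xs n)) @ \oo --> (0%R : R).

Definition I_integral (T0 : set (X -> \bar R)) (I : (X -> \bar R) -> R) : Prop :=
  [/\ ev_is_linear T0 I,
      (forall x, T0 x -> ev_fle ev_fzero x -> (0 <= I x)%R) &
      ev_seq_continuous T0 I].

Definition S_integral (T0 : set (X -> \bar R)) (S : (X -> \bar R) -> R) : Prop :=
  [/\ ev_is_linear T0 S,
      ev_seq_continuous T0 S &
      exists M : (X -> \bar R) -> R,
        (forall phi psi, ev_pos_part T0 phi -> ev_pos_part T0 psi -> ev_fle phi psi ->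
            (M phi <= M psi)%R) /\
        (forall x, T0 x -> (`| S x | <= M (ev_fabs x))%R)].

Definition ev_Pset (T0 : set (X -> \bar R)) (S : (X -> \bar R) -> R) (x : X -> \bar R)
  : set R := [set S phi | phi in [set phi | T0 phi /\ ev_fle ev_fzero phi /\ ev_fle phi x]].

Definition ev_Pfun T0 S x : R := sup (ev_Pset T0 S x).

Definition ev_Splus T0 S (x : X -> \bar R) : R :=
  (ev_Pfun T0 S (ev_fmax x ev_fzero) - ev_Pfun T0 S (ev_fmax (ev_fopp x) ev_fzero))%R.
Definition ev_Sminus T0 S (x : X -> \bar R) : R := (ev_Splus T0 S x - S x)%R.
Definition ev_Sabs T0 S (x : X -> \bar R) : R := (ev_Splus T0 S x + ev_Sminus T0 S x)%R.

End Ext.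

From HB Require Import structures.
From mathcomp Require Import all_boot all_order all_algebra.
From mathcomp Require Import all_classical all_reals all_analysis.
From mathcomp Require Import ring lra.
Import Order.TTheory GRing.Theory Num.Theory numFieldNormedType.Exports.
Set Implicit Arguments.
Unset Strict Implicit.
Local Open Scope classical_set_scope.
Local Open Scope ring_scope.

(* For x >= 0 let P(x) = sup {S(phi) : 0 <= phi <= x}; the bound |S| <= M(|.|)
   with M monotone makes this supremum finite.  The proof follows the classical
   route for order-bounded functionals on a vector lattice:
   1. pointwise facts about the extended reals under the convention
      oo + (-oo) = 0 (Riesz decomposition, Jordan decomposition of a sum);
   2. closure properties of T0 and the algebra of linear functionals on it;
   3. P is additive (via the Riesz decomposition phi = min(phi,x1) + rest) and
      positively homogeneous on T0^+, hence S^+(x) = P(x^+) - P(x^-) is linear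
      and equals P(phi) - P(psi) for any decomposition x = phi - psi;
   4. S^+ is sequentially continuous: for x_n decreasing to 0 and z <= x_0 with
      S(z) close to P(x_0), P(x_n) <= P(x_0) - S(z) + S(min(z, x_n)), and the
      last term tends to 0 by the continuity of S;
   5. S^- = S^+ - S and |S| = S^+ + S^- inherit linearity and continuity and are
      positive because S <= P on T0^+. *)

Section ExtendedAddition.
Variable R : realType.
Local Open Scope ereal_scope.
Notation xadd := (@ev_xadd R).
Implicit Types a b c d p q z : \bar R.
(* let [/=] evaluate extended addition once its arguments are constructors *)
Local Arguments adde : simpl nomatch.

Let ereal0 : (0 : \bar R) = 0%R%:E. Proof. by []. Qed.
Let addE (a b : \bar R) : a + b = adde a b. Proof. by []. Qed.
Let leE (a b : \bar R) : (a <= b) = le_ereal a b. Proof. by []. Qed.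

(* Decide an identity or inequality by splitting every extended real into the
   cases finite / +oo / -oo, and the resulting real comparisons by [leP]. *)
Local Ltac ereal_cases :=
  repeat match goal with a : \bar _ |- _ => destruct a as [a| |] end;
  rewrite ?maxEle ?minEle ?addE ?leE /= ?ereal0 ?addE ?leE /= ?num_real /=; intros;
  repeat (let h := fresh "h" in
          case: leP => h; rewrite ?addE ?leE /= ?ereal0 ?addE ?leE /= ?num_real /=);
  try done; try congr EFin; lra.

Lemma xadd0 a : xadd a 0 = a.
Proof. ereal_cases. Qed.

Lemma xadd_ge0 a b : 0 <= a -> 0 <= b -> 0 <= xadd a b.
Proof. ereal_cases. Qed.

Lemma xadd_le a b c d : 0 <= a -> a <= b -> 0 <= c -> c <= d -> xadd a c <= xadd b d.
Proof. ereal_cases. Qed.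

Lemma xsub_ge0 a b : 0 <= b -> b <= a -> 0 <= xadd a (- b).
Proof. ereal_cases. Qed.

Lemma xadd_subK a b : 0 <= b -> b <= a -> xadd b (xadd a (- b)) = a.
Proof. ereal_cases. Qed.

Lemma max0_ge0 a : 0 <= Order.max a 0.
Proof. ereal_cases. Qed.

Lemma min_ge0 a b : 0 <= a -> 0 <= b -> 0 <= Order.min a b.
Proof. ereal_cases. Qed.

Lemma min_lel a b : Order.min a b <= a.
Proof. ereal_cases. Qed.

Lemma min_ler a b : Order.min a b <= b.
Proof. ereal_cases. Qed.

Lemma min_ler_le a b c : 0 <= a -> 0 <= c -> c <= b -> Order.min a c <= Order.min a b.
Proof. ereal_cases. Qed.

Lemma riesz_rest_le p (x1 x2 : \bar R) : 0 <= p -> 0 <= x1 -> 0 <= x2 -> p <= xadd x1 x2 ->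
  xadd p (- Order.min p x1) <= x2.
Proof. ereal_cases. Qed.

Lemma sub_min_le z a b : 0 <= z -> z <= a -> 0 <= b -> b <= a ->
  xadd z (- Order.min z b) <= xadd a (- b).
Proof. ereal_cases. Qed.

Lemma pos_neg_parts_sub p q : 0 <= p -> 0 <= q ->
  xadd (Order.max (xadd p (- q)) 0) q = xadd (Order.max (- xadd p (- q)) 0) p.
Proof. ereal_cases. Qed.

Lemma pos_neg_parts_add a b : xadd a b =
  xadd (xadd (Order.max a 0) (Order.max b 0)) (- xadd (Order.max (- a) 0) (Order.max (- b) 0)).
Proof. ereal_cases. Qed.

End ExtendedAddition.

Section PointwiseOperations.
Variables (R : realType) (X : Type).
Implicit Types x : X -> \bar R.
Notation fz := (@ev_fzero R X).

Lemma fscale0 x : ev_fscale 0 x = fz.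
Proof. by apply: funext => t; rewrite /ev_fscale mul0e. Qed.

Lemma fscale1 x : ev_fscale 1 x = x.
Proof. by apply: funext => t; rewrite /ev_fscale mul1e. Qed.

Lemma fscaleN1 x : ev_fscale (-1) x = ev_fopp x.
Proof. by apply: funext => t; rewrite /ev_fscale /ev_fopp EFinN mulN1e. Qed.

Lemma fscaleA a b x : ev_fscale a (ev_fscale b x) = ev_fscale (a * b) x.
Proof. by apply: funext => t; rewrite /ev_fscale muleA. Qed.

Lemma fle_refl x : ev_fle x x.
Proof. by move=> t; exact: lexx. Qed.

Lemma fadd0 x : ev_fadd x fz = x.
Proof. by apply: funext => t; rewrite /ev_fadd xadd0. Qed.

Lemma foppK x : ev_fopp (ev_fopp x) = x.
Proof. by apply: funext => t; rewrite /ev_fopp oppeK. Qed.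

Lemma fopp_scale c x : ev_fopp (ev_fscale c x) = ev_fscale c (ev_fopp x).
Proof. by apply: funext => t; rewrite /ev_fopp /ev_fscale muleN. Qed.

Lemma fscaleN c x : ev_fscale (- c) x = ev_fopp (ev_fscale c x).
Proof. by apply: funext => t; rewrite /ev_fopp /ev_fscale EFinN mulNe. Qed.

Lemma fmax0_scale c x : 0 <= c -> ev_fmax (ev_fscale c x) fz = ev_fscale c (ev_fmax x fz).
Proof. by move=> c0; apply: funext => t; rewrite /ev_fmax /ev_fscale /ev_fzero maxe_pMr ?mule0. Qed.

Lemma fscale_ge0 c x : 0 <= c -> ev_fle fz x -> ev_fle fz (ev_fscale c x).
Proof. by move=> c0 x0 t; apply: mule_ge0; [rewrite lee_fin | exact: x0]. Qed.

Lemma fscale_le c x y : 0 <= c -> ev_fle x y -> ev_fle (ev_fscale c x) (ev_fscale c y).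
Proof. by move=> c0 xy t; apply: lee_wpmul2l; [rewrite lee_fin | exact: xy]. Qed.

End PointwiseOperations.

Section DecreasingSequences.
Variables (R : realType) (X : Type).
Implicit Types xs : nat -> X -> \bar R.
Notation fz := (@ev_fzero R X).

Lemma decr_le xs : ev_decr_to0 xs -> forall m n t, (m <= n)%N -> (xs n t <= xs m t)%E.
Proof.
move=> [decr _] m n t mn; rewrite -(subnKC mn).
elim: (n - m)%N => [|k IH]; first by rewrite addn0.
by rewrite addnS; apply: le_trans (decr _ _) IH.
Qed.

Lemma decr_ge0 xs : ev_decr_to0 xs -> forall n t, (0 <= xs n t)%E.
Proof.
move=> dxs n t; apply: (cvge_to_le (dxs.2 t)).
by exists n => // m /= nm; apply: decr_le.
Qed.

Lemma decr_min xs (z : X -> \bar R) : ev_fle fz z -> ev_decr_to0 xs ->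
  ev_decr_to0 (fun n => ev_fmin z (xs n)).
Proof.
move=> z0 dxs; split=> [n t|t].
  by apply: min_ler_le; [exact: z0 | exact: decr_ge0 | exact: dxs.1].
apply: (@squeeze_cvge _ _ _ _ (fun _ => 0%E) _ (fun n => xs n t)); last exact: dxs.2.
- apply: nearW => n; rewrite /ev_fmin min_ler andbT.
  by apply: min_ge0; [exact: z0 | exact: decr_ge0].
- exact: cvg_cst.
Qed.

End DecreasingSequences.

Section VectorLattice.
Variables (R : realType) (X : Type) (T0 : set (X -> \bar R)).
Hypothesis HT0 : ext_vector_lattice T0.
Implicit Types x y : X -> \bar R.
Notation fz := (@ev_fzero R X).

Lemma T_scale a x : T0 x -> T0 (ev_fscale a x).
Proof.
by move=> Tx; case: HT0 => lin _ _ _; have := lin x x a 0 Tx Tx; rewrite fscale0 fadd0.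
Qed.

Lemma T_add x y : T0 x -> T0 y -> T0 (ev_fadd x y).
Proof.
by move=> Tx Ty; case: HT0 => lin _ _ _; have := lin x y 1 1 Tx Ty; rewrite !fscale1.
Qed.

Lemma T_opp x : T0 x -> T0 (ev_fopp x).
Proof. by move=> Tx; rewrite -fscaleN1; apply: T_scale. Qed.

Lemma T_sub x y : T0 x -> T0 y -> T0 (ev_fsub x y).
Proof. by move=> Tx Ty; apply: T_add => //; apply: T_opp. Qed.

Lemma T_min x y : T0 x -> T0 y -> T0 (ev_fmin x y).
Proof. by case: HT0 => _ min_closed _ _; apply: min_closed. Qed.

Lemma T_max x y : T0 x -> T0 y -> T0 (ev_fmax x y).
Proof. by case: HT0 => _ _ max_closed _; apply: max_closed. Qed.

Lemma T_zero x : T0 x -> T0 fz.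
Proof. by move=> Tx; rewrite -(fscale0 x); apply: T_scale. Qed.

Lemma pos_part_pos x : T0 x -> ev_pos_part T0 (ev_fmax x fz).
Proof.
by move=> Tx; split=> [|t]; [apply: T_max => //; exact: T_zero Tx | exact: max0_ge0].
Qed.

Lemma neg_part_pos x : T0 x -> ev_pos_part T0 (ev_fmax (ev_fopp x) fz).
Proof. by move=> Tx; apply: pos_part_pos; apply: T_opp. Qed.

Lemma pos_add x y : ev_pos_part T0 x -> ev_pos_part T0 y -> ev_pos_part T0 (ev_fadd x y).
Proof.
move=> [Tx x0] [Ty y0]; split=> [|t]; first exact: T_add.
by apply: xadd_ge0; [exact: x0 | exact: y0].
Qed.

End VectorLattice.

Section LinearFunctionals.
Variables (R : realType) (X : Type) (T0 : set (X -> \bar R)).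
Hypothesis HT0 : ext_vector_lattice T0.
Implicit Types (x y : X -> \bar R) (f g : (X -> \bar R) -> R).
Notation fz := (@ev_fzero R X).

Lemma lin_scale f : ev_is_linear T0 f -> forall a x, T0 x -> f (ev_fscale a x) = a * f x.
Proof. by move=> lf a x Tx; have := lf x x a 0 Tx Tx; rewrite fscale0 fadd0 mul0r addr0. Qed.

Lemma lin_add f : ev_is_linear T0 f -> forall x y, T0 x -> T0 y -> f (ev_fadd x y) = f x + f y.
Proof. by move=> lf x y Tx Ty; have := lf x y 1 1 Tx Ty; rewrite !fscale1 !mul1r. Qed.

Lemma lin_sub f : ev_is_linear T0 f -> forall x y, T0 x -> T0 y -> f (ev_fsub x y) = f x - f y.
Proof.
move=> lf x y Tx Ty; rewrite /ev_fsub lin_add //; last exact: T_opp.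
by rewrite -fscaleN1 lin_scale // mulN1r.
Qed.

Lemma lin_zero f x : ev_is_linear T0 f -> T0 x -> f fz = 0.
Proof. by move=> lf Tx; rewrite -(fscale0 x) lin_scale // mul0r. Qed.

Lemma linearD f g : ev_is_linear T0 f -> ev_is_linear T0 g ->
  ev_is_linear T0 (fun x => f x + g x).
Proof. by move=> lf lg x y a b Tx Ty; rewrite lf // lg //; ring. Qed.

Lemma linearB f g : ev_is_linear T0 f -> ev_is_linear T0 g ->
  ev_is_linear T0 (fun x => f x - g x).
Proof. by move=> lf lg x y a b Tx Ty; rewrite lf // lg //; ring. Qed.

Lemma seq_continuousD f g : ev_seq_continuous T0 f -> ev_seq_continuous T0 g ->
  ev_seq_continuous T0 (fun x => f x + g x).
Proof. by move=> cf cg xs Txs dxs; rewrite -[0]addr0; apply: cvgD; [exact: cf | exact: cg]. Qed.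

Lemma seq_continuousB f g : ev_seq_continuous T0 f -> ev_seq_continuous T0 g ->
  ev_seq_continuous T0 (fun x => f x - g x).
Proof. by move=> cf cg xs Txs dxs; rewrite -[0]subr0; apply: cvgB; [exact: cf | exact: cg]. Qed.

End LinearFunctionals.

Section JordanDecomposition.
Variables (R : realType) (X : Type) (T0 : set (X -> \bar R)) (S : (X -> \bar R) -> R)
  (M : (X -> \bar R) -> R).
Hypotheses (HT0 : ext_vector_lattice T0) (Slin : ev_is_linear T0 S)
  (M_mono : forall phi psi, ev_pos_part T0 phi -> ev_pos_part T0 psi -> ev_fle phi psi ->
     M phi <= M psi)
  (S_bound : forall x, T0 x -> `|S x| <= M (ev_fabs x)).
Implicit Types x y z phi psi : X -> \bar R.
Notation fz := (@ev_fzero R X).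
Notation pos := (ev_pos_part T0).
Notation P := (ev_Pfun T0 S).

Lemma Pset_ub x : pos x -> ubound (ev_Pset T0 S x) (M x).
Proof.
move=> px _ [phi [Tphi [phi0 phix]] <-].
have abs_phi : ev_fabs phi = phi.
  by apply: funext => t; rewrite /ev_fabs gee0_abs //; apply: phi0.
have S_le_M : S phi <= M phi.
  by apply: le_trans (ler_norm _) _; rewrite -[in M phi]abs_phi; exact: S_bound.
by apply: le_trans S_le_M _; apply: M_mono.
Qed.

Lemma has_sup_Pset x : pos x -> has_sup (ev_Pset T0 S x).
Proof.
move=> [Tx x0]; split; last by exists (M x); apply: Pset_ub.
exists (S fz), fz => //.
by split; [exact: T_zero Tx | split; [exact: fle_refl | exact: x0]].
Qed.

Lemma P_ge x phi : pos x -> T0 phi -> ev_fle fz phi -> ev_fle phi x -> S phi <= P x.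
Proof. by move=> px Tphi phi0 phix; apply: sup_upper_bound (has_sup_Pset px) _ _; exists phi. Qed.

Lemma P_le x c : pos x ->
  (forall phi, T0 phi -> ev_fle fz phi -> ev_fle phi x -> S phi <= c) -> P x <= c.
Proof.
move=> px H; apply: ge_sup; first by case: (has_sup_Pset px).
by move=> _ [phi [Tphi [phi0 phix]] <-]; apply: H.
Qed.

Lemma P_ge0 x : pos x -> 0 <= P x.
Proof.
move=> px; case: (px) => Tx x0; rewrite -(lin_zero Slin Tx).
by apply: P_ge => //; first [exact: T_zero Tx | exact: fle_refl].
Qed.

Lemma P_zero x : T0 x -> P fz = 0.
Proof.
move=> Tx; have pz : pos fz by split; [exact: T_zero Tx | exact: fle_refl].
apply/le_anti; rewrite (P_ge0 pz) andbT; apply: P_le => // phi _ phi0 phi_le0.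
have -> : phi = fz by apply: funext => t; apply/le_anti; rewrite phi0 phi_le0.
by rewrite (lin_zero Slin Tx).
Qed.

Lemma S_le_P x : pos x -> S x <= P x.
Proof. by move=> px; case: (px) => Tx x0; apply: P_ge => // t. Qed.

(* Riesz decomposition: every phi <= x1 + x2 splits as a sum of pieces below
   x1 and x2, hence P(x1 + x2) <= P(x1) + P(x2). *)
Lemma P_subadditive x1 x2 : pos x1 -> pos x2 -> P (ev_fadd x1 x2) <= P x1 + P x2.
Proof.
move=> p1 p2; apply: P_le; first exact: pos_add.
move=> phi Tphi phi0 phix; have [[T1 x10] [T2 x20]] := (p1, p2).
pose phi1 := ev_fmin phi x1; pose phi2 := ev_fsub phi phi1.
have T_phi1 : T0 phi1 by apply: T_min.
have phi1_ge0 : ev_fle fz phi1 by move=> t; apply: min_ge0; [exact: phi0 | exact: x10].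
have phi1_le : ev_fle phi1 phi by move=> t; exact: min_lel.
have phi_split : phi = ev_fadd phi1 phi2.
  apply: funext => t; rewrite /ev_fadd /phi2 /ev_fsub /ev_fadd.
  by rewrite xadd_subK //; first [exact: phi1_ge0 | exact: phi1_le].
have S1 : S phi1 <= P x1 by apply: P_ge => // t; exact: min_ler.
have S2 : S phi2 <= P x2.
  apply: P_ge => //; first exact: T_sub.
    by move=> t; apply: xsub_ge0; [exact: phi1_ge0 | exact: phi1_le].
  by move=> t; apply: riesz_rest_le; [exact: phi0 | exact: x10 | exact: x20 | exact: phix].
by rewrite phi_split (lin_add Slin) //; [exact: lerD | exact: T_sub].
Qed.

Lemma P_superadditive x1 x2 : pos x1 -> pos x2 -> P x1 + P x2 <= P (ev_fadd x1 x2).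
Proof.
move=> p1 p2; have p12 := pos_add HT0 p1 p2.
rewrite -lerBrDr; apply: P_le => // phi1 T1 phi10 phi1x.
rewrite lerBrDl -lerBrDr; apply: P_le => // phi2 T2 phi20 phi2x.
have sum_ge0 : ev_fle fz (ev_fadd phi1 phi2).
  by move=> t; apply: xadd_ge0; [exact: phi10 | exact: phi20].
have sum_le : ev_fle (ev_fadd phi1 phi2) (ev_fadd x1 x2).
  by move=> t; apply: xadd_le; [exact: phi10 | exact: phi1x | exact: phi20 | exact: phi2x].
by rewrite lerBrDl -(lin_add Slin) //; apply: P_ge => //; apply: T_add.
Qed.

Lemma P_add x1 x2 : pos x1 -> pos x2 -> P (ev_fadd x1 x2) = P x1 + P x2.
Proof. by move=> p1 p2; apply/le_anti; rewrite P_subadditive // P_superadditive. Qed.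

Lemma pos_scale c x : 0 <= c -> pos x -> pos (ev_fscale c x).
Proof. by move=> c0 [Tx x0]; split; [exact: T_scale | exact: fscale_ge0]. Qed.

(* for phi <= c x we have c^-1 phi <= x, hence S(phi) = c S(c^-1 phi) <= c P(x) *)
Lemma P_scale_le c x : 0 < c -> pos x -> P (ev_fscale c x) <= c * P x.
Proof.
move=> c0 px; apply: P_le => [|phi Tphi phi0 phix]; first by apply: pos_scale; rewrite ?ltW.
have c_neq0 : c != 0 by rewrite gt_eqF.
have phiE : phi = ev_fscale c (ev_fscale c^-1 phi) by rewrite fscaleA mulfV // fscale1.
rewrite phiE (lin_scale Slin) //; last exact: T_scale.
apply: ler_wpM2l; first exact: ltW.
apply: P_ge => //; first exact: T_scale.
  by apply: fscale_ge0; rewrite // invr_ge0 ltW.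
rewrite -[x]fscale1 -(mulVf c_neq0) -fscaleA.
by apply: fscale_le; [rewrite invr_ge0 ltW | exact: phix].
Qed.

(* P is positively homogeneous: apply the previous bound to c and to c^-1 *)
Lemma P_scale c x : 0 <= c -> pos x -> P (ev_fscale c x) = c * P x.
Proof.
move=> c_ge0 px; case: (px) => Tx _.
move: c_ge0; rewrite le_eqVlt => /predU1P[<-|c0].
  by rewrite fscale0 mul0r (P_zero Tx).
have c_neq0 : c != 0 by rewrite gt_eqF.
have pcx : pos (ev_fscale c x) by apply: pos_scale; rewrite ?ltW.
have c_inv_gt0 : 0 < c^-1 by rewrite invr_gt0.
have := P_scale_le c_inv_gt0 pcx.
rewrite fscaleA mulVf // fscale1 => Px_le.
apply/le_anti; rewrite P_scale_le //=.
rewrite -[P (ev_fscale c x)](mulVKf c_neq0).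
by apply: ler_wpM2l; [exact: ltW | exact: Px_le].
Qed.

Notation Sp := (ev_Splus T0 S).

(* S^+ may be computed from any decomposition x = phi - psi with phi, psi in
   T0^+: both sides of x^+ + psi = x^- + phi are sums in T0^+ and P is additive *)
Lemma Splus_dec x phi psi : pos phi -> pos psi -> x = ev_fsub phi psi ->
  Sp x = P phi - P psi.
Proof.
move=> pphi ppsi ex; have [[Tphi phi0] [Tpsi psi0]] := (pphi, ppsi).
have Tx : T0 x by rewrite ex; apply: T_sub.
have parts : ev_fadd (ev_fmax x fz) psi = ev_fadd (ev_fmax (ev_fopp x) fz) phi.
  apply: funext => t; rewrite ex /ev_fadd /ev_fmax /ev_fsub /ev_fopp /ev_fadd /ev_fzero.
  by apply: pos_neg_parts_sub; [exact: phi0 | exact: psi0].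
have [px nx] := (pos_part_pos HT0 Tx, neg_part_pos HT0 Tx).
by have := congr1 P parts; rewrite !P_add // /ev_Splus => P_parts; lra.
Qed.

Lemma Splus_pos x : pos x -> Sp x = P x.
Proof.
move=> px; case: (px) => Tx _.
have pz : pos fz by split; [exact: T_zero Tx | exact: fle_refl].
rewrite (@Splus_dec x x fz) // ?(P_zero Tx) ?subr0 //.
by apply: funext => t; rewrite /ev_fsub /ev_fadd /ev_fopp /ev_fzero oppe0 xadd0.
Qed.

Lemma Splus_add x y : T0 x -> T0 y -> Sp (ev_fadd x y) = Sp x + Sp y.
Proof.
move=> Tx Ty.
have [px py] := (pos_part_pos HT0 Tx, pos_part_pos HT0 Ty).
have [nx ny] := (neg_part_pos HT0 Tx, neg_part_pos HT0 Ty).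
rewrite (@Splus_dec _ (ev_fadd (ev_fmax x fz) (ev_fmax y fz))
   (ev_fadd (ev_fmax (ev_fopp x) fz) (ev_fmax (ev_fopp y) fz))).
- by rewrite !P_add // /ev_Splus; lra.
- by apply: (pos_add HT0).
- by apply: (pos_add HT0).
by apply: funext => t; exact: pos_neg_parts_add.
Qed.

(* negation swaps the positive and negative parts *)
Lemma Splus_opp x : Sp (ev_fopp x) = - Sp x.
Proof. by rewrite /ev_Splus foppK opprB. Qed.

Lemma Splus_scale_ge0 c x : 0 <= c -> T0 x -> Sp (ev_fscale c x) = c * Sp x.
Proof.
move=> c0 Tx; have [pp np] := (pos_part_pos HT0 Tx, neg_part_pos HT0 Tx).
by rewrite /ev_Splus fopp_scale !fmax0_scale // !P_scale // mulrBr.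
Qed.

Lemma Splus_scale c x : T0 x -> Sp (ev_fscale c x) = c * Sp x.
Proof.
move=> Tx; case: (leP 0 c) => [c0|c_lt0]; first exact: Splus_scale_ge0.
rewrite -[c]opprK fscaleN Splus_opp Splus_scale_ge0 ?mulNr //.
by rewrite oppr_ge0; exact: ltW.
Qed.

Lemma Splus_lin : ev_is_linear T0 Sp.
Proof.
move=> x y a b Tx Ty.
by rewrite Splus_add ?Splus_scale //; apply: T_scale.
Qed.

(* If x <= x0 in T0^+ and 0 <= z <= x0 in T0, then P(x0) - P(x) = P(x0 - x)
   dominates S(z - min(z, x)); this estimate drives the continuity of S^+. *)
Lemma P_le_tail x0 x z : pos x -> ev_fle x x0 -> T0 x0 -> T0 z -> ev_fle fz z ->
  ev_fle z x0 -> P x <= P x0 - S z + S (ev_fmin z x).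
Proof.
move=> px xx0 Tx0 Tz z0 zx0; have [Tx x_ge0] := px.
pose y := ev_fsub x0 x.
have py : pos y.
  by split; [exact: T_sub | move=> t; apply: xsub_ge0; [exact: x_ge0 | exact: xx0]].
have P_split : P x0 = P x + P y.
  rewrite -P_add //; congr P; apply: funext => t.
  by rewrite /y /ev_fsub /ev_fadd /ev_fopp xadd_subK //; first [exact: x_ge0 | exact: xx0].
have Tm : T0 (ev_fmin z x) by apply: T_min.
have S_rest : S z - S (ev_fmin z x) <= P y.
  rewrite -(lin_sub HT0 Slin) //; apply: P_ge => //; first exact: T_sub.
    move=> t; apply: xsub_ge0; last exact: min_lel.
    by apply: min_ge0; [exact: z0 | exact: x_ge0].
  by move=> t; apply: sub_min_le; [exact: z0 | exact: zx0 | exact: x_ge0 | exact: xx0].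
lra.
Qed.

Hypothesis Scont : ev_seq_continuous T0 S.

(* Given e > 0 pick z <= x_0 with S(z) > P(x_0) - e/2; then by [P_le_tail]
   0 <= P(x_n) <= e/2 + S(min(z, x_n)), and S(min(z, x_n)) -> 0. *)
Lemma Splus_cont : ev_seq_continuous T0 Sp.
Proof.
move=> xs Txs dxs.
have pxs n : pos (xs n) by split => // t; exact: decr_ge0.
have -> : (fun n => Sp (xs n)) = (fun n => P (xs n)) by apply: funext => n; rewrite Splus_pos.
apply/cvgrPdist_le => e e0; have e20 : 0 < e / 2 by rewrite divr_gt0.
have [_ [z [Tz [z0 zx]] <-] Sz_gt] := sup_adherent e20 (has_sup_Pset (pxs 0%N)).
have {}Sz_gt : P (xs 0%N) - e / 2 < S z by exact: Sz_gt.
have Tw n : T0 (ev_fmin z (xs n)) by apply: T_min.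
have := Scont Tw (decr_min z0 dxs) => /cvgrPdist_le /(_ _ e20).
apply: filterS => n; rewrite !sub0r !normrN => Sw_small.
rewrite ger0_norm ?P_ge0 //.
have := P_le_tail (pxs n) (fun t => decr_le dxs t (leq0n n)) (Txs 0%N) Tz z0 zx.
have := ler_norm (S (ev_fmin z (xs n))).
lra.
Qed.

Lemma Splus_I_integral : I_integral T0 Sp.
Proof.
split; [exact: Splus_lin | | exact: Splus_cont].
by move=> x Tx x0; rewrite Splus_pos //; apply: P_ge0.
Qed.

(* S^- = S^+ - S is positive because S <= P on T0^+ *)
Lemma Sminus_I_integral : I_integral T0 (ev_Sminus T0 S).
Proof.
split; [exact: linearB Splus_lin Slin | | exact: seq_continuousB Splus_cont Scont].
by move=> x Tx x0; rewrite /ev_Sminus Splus_pos // subr_ge0 S_le_P.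
Qed.

Lemma Sabs_I_integral : I_integral T0 (ev_Sabs T0 S).
Proof.
have [Sm_lin Sm_pos Sm_cont] := Sminus_I_integral.
split; [exact: linearD Splus_lin Sm_lin | | exact: seq_continuousD Splus_cont Sm_cont].
move=> x Tx x0; apply: addr_ge0; last exact: Sm_pos.
by rewrite Splus_pos //; apply: P_ge0.
Qed.

End JordanDecomposition.

Unset Implicit Arguments.

Theorem mainTheorem17 (R : realType) (X : Type) (HX : inhabited X)
  (T0 : set (X -> \bar R)) (S : (X -> \bar R) -> R)
  (HT0 : ext_vector_lattice T0) (HS : S_integral T0 S) :
  [/\ (forall x, ev_pos_part T0 x -> has_sup (ev_Pset T0 S x)),
      (forall x1 x2, ev_pos_part T0 x1 -> ev_pos_part T0 x2 ->
         ev_Pfun T0 S (ev_fadd x1 x2) = ev_Pfun T0 S x1 + ev_Pfun T0 S x2),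
      (forall x phi psi, ev_pos_part T0 phi -> ev_pos_part T0 psi -> x = ev_fsub phi psi ->
         ev_Splus T0 S x = ev_Pfun T0 S phi - ev_Pfun T0 S psi),
      [/\ I_integral T0 (ev_Splus T0 S), I_integral T0 (ev_Sminus T0 S) &
          I_integral T0 (ev_Sabs T0 S)] &
      (forall x, T0 x -> S x = ev_Splus T0 S x - ev_Sminus T0 S x)].
Proof.
case: HS => Slin Scont [M [M_mono S_bound]].
split.
- exact: has_sup_Pset HT0 M_mono S_bound.
- exact: P_add HT0 Slin M_mono S_bound.
- exact: Splus_dec HT0 Slin M_mono S_bound.
- split; [exact: Splus_I_integral HT0 Slin M_mono S_bound Scont
         | exact: Sminus_I_integral HT0 Slin M_mono S_bound Scont
         | exact: Sabs_I_integral HT0 Slin M_mono S_bound Scont].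
- by move=> x _; rewrite /ev_Sminus opprB addrC subrK.
Qed.
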